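(* Let $(\Phi,G)$, $(\Psi,H)$ be perception pairs and $T:G\to H$ a homomorphism. Then the set $\mathcal{F}^{\mathrm{all}}$ of all GENEOs from $(\Phi,G)$ to $(\Psi,H)$ associated with $T$ is compact with respect to $D_{\mathrm{GENEO}}$.
   Context: A perception pair $(\Phi,G)$ consists of: a nonempty set $X$; a nonempty set $\Phi$ of bounded functions $X\to\mathbb{R}$, compact with respect to $D_\Phi(\varphi_1,\varphi_2):=\|\varphi_1-\varphi_2\|_\infty$, such that $X$ is complete with respect to $D_X(x_1,x_2):=\sup_{\varphi\in\Phi}|\varphi(x_1)-\varphi(x_2)|$; and a subgroup $G$ of $\mathrm{Homeo}_\Phi(X)$ (bijections $g:X\to X$, homeomorphisms for $D_X$, with $\varphi\circ g,\varphi\circ g^{-1}\in\Phi$ for all $\varphi\in\Phi$) that is complete with respect to $D_G(g_1,g_2):=\sup_{\varphi\in\Phi}D_\Phi(\varphi\circ g_1,\varphi\circ g_2)$. Similarly $(\Psi,H)$ with $\Psi$ a set of functions on a set $Y$. A GENEO from $(\Phi,G)$ to $(\Psi,H)$ associated with $T$ is a map $F:\Phi\to\Psi$ with $F(\varphi\circ g)=F(\varphi)\circ T(g)$ for all $\varphi\in\Phi,g\in G$, and $D_\Psi(F(\varphi_1),F(\varphi_2))\le D_\Phi(\varphi_1,\varphi_2)$ for all $\varphi_1,\varphi_2\in\Phi$. $D_{\mathrm{GENEO}}(F_1,F_2):=\sup_{\varphi\in\Phi}D_\Psi(F_1(\varphi),F_2(\varphi))$. *)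

From Stdlib Require Import Reals Lra List ClassicalEpsilon.
Open Scope R_scope.

Definition supR (E : R -> Prop) : R :=
  epsilon (inhabits 0%R) (fun m => is_lub E m).

Definition Dfun {X : Type} (f g : X -> R) : R :=
  supR (fun r => exists x, r = Rabs (f x - g x)).

Definition DX {X : Type} (Phi : (X -> R) -> Prop) (x1 x2 : X) : R :=
  supR (fun r => exists phi, Phi phi /\ r = Rabs (phi x1 - phi x2)).

Definition DG {X : Type} (Phi : (X -> R) -> Prop) (g1 g2 : X -> X) : R :=
  supR (fun r => exists phi, Phi phi /\
          r = Dfun (fun x => phi (g1 x)) (fun x => phi (g2 x))).

Definition DGENEO {X Y : Type} (Phi : (X -> R) -> Prop)
  (F1 F2 : (X -> R) -> (Y -> R)) : R :=
  supR (fun r => exists phi, Phi phi /\ r = Dfun (F1 phi) (F2 phi)).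

Definition open_in {T : Type} (A : T -> Prop) (d : T -> T -> R) (U : T -> Prop) : Prop :=
  forall x, A x -> U x -> exists r, 0 < r /\ forall y, A y -> d x y < r -> U y.

Definition compact_in {T : Type} (A : T -> Prop) (d : T -> T -> R) : Prop :=
  forall (I : Type) (U : I -> T -> Prop),
    (forall i, open_in A d (U i)) ->
    (forall x, A x -> exists i, U i x) ->
    exists l : list I, forall x, A x -> exists i, In i l /\ U i x.

Definition complete_in {T : Type} (A : T -> Prop) (d : T -> T -> R) : Prop :=
  forall u : nat -> T, (forall n, A (u n)) ->
    (forall eps, 0 < eps -> exists N, forall m n, (N <= m)%nat -> (N <= n)%nat ->
        d (u m) (u n) < eps) ->
    exists l, A l /\ forall eps, 0 < eps -> exists N, forall n, (N <= n)%nat ->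
        d (u n) l < eps.

Definition continuous_wrt {X : Type} (d : X -> X -> R) (g : X -> X) : Prop :=
  forall x eps, 0 < eps -> exists delta, 0 < delta /\
    forall y, d x y < delta -> d (g x) (g y) < eps.

Definition Homeo_Phi {X : Type} (Phi : (X -> R) -> Prop) (g : X -> X) : Prop :=
  exists ginv : X -> X,
    (forall x, ginv (g x) = x) /\ (forall x, g (ginv x) = x) /\
    continuous_wrt (DX Phi) g /\ continuous_wrt (DX Phi) ginv /\
    (forall phi, Phi phi -> Phi (fun x => phi (g x)) /\ Phi (fun x => phi (ginv x))).

Definition is_subgroup_Homeo {X : Type} (Phi : (X -> R) -> Prop)
  (G : (X -> X) -> Prop) : Prop :=
  (forall g, G g -> Homeo_Phi Phi g) /\
  G (fun x => x) /\
  (forall g1 g2, G g1 -> G g2 -> G (fun x => g1 (g2 x))) /\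
  (forall g, G g -> exists h, G h /\ (forall x, h (g x) = x) /\ (forall x, g (h x) = x)).

Definition perception_pair {X : Type} (Phi : (X -> R) -> Prop)
  (G : (X -> X) -> Prop) : Prop :=
  inhabited X /\
  (exists phi, Phi phi) /\
  (forall phi, Phi phi -> exists M, forall x, Rabs (phi x) <= M) /\
  compact_in Phi Dfun /\
  complete_in (fun _ : X => True) (DX Phi) /\
  is_subgroup_Homeo Phi G /\
  complete_in G (DG Phi).

Definition is_hom {X Y : Type} (G : (X -> X) -> Prop) (H : (Y -> Y) -> Prop)
  (T : (X -> X) -> (Y -> Y)) : Prop :=
  (forall g, G g -> H (T g)) /\
  (forall g1 g2, G g1 -> G g2 -> T (fun x => g1 (g2 x)) = (fun y => T g1 (T g2 y))).

Definition is_GENEO {X Y : Type} (Phi : (X -> R) -> Prop) (G : (X -> X) -> Prop)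
  (Psi : (Y -> R) -> Prop) (T : (X -> X) -> (Y -> Y))
  (F : (X -> R) -> (Y -> R)) : Prop :=
  (forall phi, Phi phi -> Psi (F phi)) /\
  (forall phi g, Phi phi -> G g ->
     F (fun x => phi (g x)) = (fun y => F phi (T g y))) /\
  (forall phi1 phi2, Phi phi1 -> Phi phi2 -> Dfun (F phi1) (F phi2) <= Dfun phi1 phi2).

From Stdlib Require Import Reals Lra Lia List ClassicalEpsilon Classical FunctionalExtensionality.
Open Scope R_scope.

(* Equivariance and nonexpansiveness pass to pointwise limits and Psi, being compact, is
   complete; hence the GENEOs form a complete space for D_GENEO. Nonexpansiveness makes
   them equicontinuous, so finite nets of the compact spaces Phi and Psi cut them into
   finitely many classes of small diameter (Arzela-Ascoli). Complete and totally bounded,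
   the space of GENEOs is compact. *)

Definition bounded_fun {X : Type} (f : X -> R) : Prop :=
  exists M, forall x, Rabs (f x) <= M.

Definition pseudometric_on {T : Type} (A : T -> Prop) (d : T -> T -> R) : Prop :=
  (forall x, A x -> d x x = 0) /\
  (forall x y, A x -> A y -> d x y = d y x) /\
  (forall x y z, A x -> A y -> A z -> d x z <= d x y + d y z).

Lemma pseudometric_on_sub {T : Type} (A B : T -> Prop) (d : T -> T -> R) :
  (forall x, A x -> B x) -> pseudometric_on B d -> pseudometric_on A d.
Proof. intros HAB [d0 [dsym dtri]]. split; [|split]; auto. Qed.

Definition cauchy_seq {T : Type} (d : T -> T -> R) (u : nat -> T) : Prop :=
  forall eps, 0 < eps -> exists N, forall m n, (N <= m)%nat -> (N <= n)%nat ->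
    d (u m) (u n) < eps.

Definition seq_converges {T : Type} (d : T -> T -> R) (u : nat -> T) (l : T) : Prop :=
  forall eps, 0 < eps -> exists N, forall n, (N <= n)%nat -> d (u n) l < eps.

Lemma Rabs_triang3 a b c : Rabs (a + b + c) <= Rabs a + Rabs b + Rabs c.
Proof.
  eapply Rle_trans; [apply Rabs_triang|].
  apply Rplus_le_compat_r, Rabs_triang.
Qed.

Lemma Un_cv_const (a : R) : Un_cv (fun _ => a) a.
Proof.
  intros eps Heps. exists 0%nat. intros n _. unfold Rdist.
  rewrite Rminus_diag, Rabs_R0. lra.
Qed.

Lemma Un_cv_dist_le (a b : nat -> R) la lb c N :
  Un_cv a la -> Un_cv b lb -> (forall n, (N <= n)%nat -> Rabs (a n - b n) <= c) ->
  Rabs (la - lb) <= c.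
Proof.
  intros Ha Hb Hab. apply Rle_plus_epsilon. intros eps Heps.
  destruct (Ha (eps / 2)) as [Na HNa]; [lra|].
  destruct (Hb (eps / 2)) as [Nb HNb]; [lra|].
  set (n := max N (max Na Nb)).
  specialize (HNa n ltac:(unfold n; lia)). specialize (HNb n ltac:(unfold n; lia)).
  specialize (Hab n ltac:(unfold n; lia)). unfold Rdist in *.
  replace (la - lb) with (- (a n - la) + (a n - b n) + (b n - lb)) by ring.
  pose proof (Rabs_triang3 (- (a n - la)) (a n - b n) (b n - lb)).
  rewrite Rabs_Ropp in *. lra.
Qed.

Lemma inv_succ_lt eps : 0 < eps -> exists k, / INR (S k) < eps.
Proof.
  intros Heps. destruct (archimed_cor1 eps Heps) as [[|k] [Hk Hpos]]; [lia|]. eauto.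
Qed.

Lemma sequence_choice {A : Type} (P : A -> Prop) (Rel : nat -> A -> A -> Prop) (a0 : A) :
  P a0 -> (forall n a, P a -> exists b, P b /\ Rel n a b) ->
  exists f : nat -> A, f O = a0 /\ forall n, P (f n) /\ Rel n (f n) (f (S n)).
Proof.
  intros H0 Hstep.
  destruct (choice (fun na b => P (snd na) -> P b /\ Rel (fst na) (snd na) b))
    as [step Hs].
  { intros [n a]. destruct (classic (P a)) as [Ha|Ha].
    - destruct (Hstep n a Ha) as [b Hb]. eauto.
    - exists a. simpl. tauto. }
  set (f := fix f n := match n with O => a0 | S m => step (m, f m) end).
  exists f. split; [reflexivity|].
  assert (Hf : forall n, P (f n)).
  { induction n as [|n IH]; [exact H0| exact (proj1 (Hs (n, f n) IH))]. }
  intros n. split; [apply Hf| exact (proj2 (Hs (n, f n) (Hf n)))].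
Qed.

Lemma supR_lub (E : R -> Prop) :
  (exists x, E x) -> (exists M, forall x, E x -> x <= M) -> is_lub E (supR E).
Proof.
  intros Hne Hbd. unfold supR. apply epsilon_spec.
  destruct (completeness E) as [m Hm]; [exact Hbd| exact Hne|]. eauto.
Qed.

Lemma supR_ub (E : R -> Prop) M x : (forall y, E y -> y <= M) -> E x -> x <= supR E.
Proof. intros HM Hx. apply (supR_lub E); eauto. Qed.

Lemma supR_le (E : R -> Prop) c : (exists x, E x) -> (forall y, E y -> y <= c) -> supR E <= c.
Proof. intros Hne Hc. apply (supR_lub E Hne (ex_intro _ c Hc)). exact Hc. Qed.

Section SupDistance.
Context {X : Type}.
Implicit Types f g h : X -> R.

Lemma Dfun_ub f g x : bounded_fun f -> bounded_fun g -> Rabs (f x - g x) <= Dfun f g.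
Proof.
  intros [Mf Hf] [Mg Hg]. apply (supR_ub _ (Mf + Mg)); [|eauto].
  intros r [y ->]. specialize (Hf y). specialize (Hg y).
  unfold Rminus. eapply Rle_trans; [apply Rabs_triang|]. rewrite Rabs_Ropp. lra.
Qed.

Lemma Dfun_le f g c : inhabited X -> (forall x, Rabs (f x - g x) <= c) -> Dfun f g <= c.
Proof.
  intros [x0] Hc. apply supR_le; [exists (Rabs (f x0 - g x0)), x0; reflexivity|].
  intros r [x ->]. apply Hc.
Qed.

Lemma Dfun_pseudometric : inhabited X -> pseudometric_on (@bounded_fun X) Dfun.
Proof.
  intros [x0]. split; [|split].
  - intros f Hf. apply Rle_antisym.
    + apply Dfun_le; [now constructor|]. intros x. rewrite Rminus_diag, Rabs_R0. lra.
    + eapply Rle_trans; [apply Rabs_pos| apply (Dfun_ub f f x0 Hf Hf)].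
  - intros f g Hf Hg.
    apply Rle_antisym; (apply Dfun_le; [now constructor|]);
      intros x; rewrite Rabs_minus_sym; apply Dfun_ub; assumption.
  - intros f g h Hf Hg Hh. apply Dfun_le; [now constructor|]. intros x.
    replace (f x - h x) with ((f x - g x) + (g x - h x)) by ring.
    eapply Rle_trans; [apply Rabs_triang|].
    apply Rplus_le_compat; apply Dfun_ub; assumption.
Qed.

Lemma Dfun_converges_pointwise (u : nat -> X -> R) l :
  (forall n, bounded_fun (u n)) -> bounded_fun l -> seq_converges Dfun u l ->
  forall x, Un_cv (fun n => u n x) (l x).
Proof.
  intros Hu Hl Hcv x eps Heps. destruct (Hcv eps Heps) as [N HN]. exists N.
  intros n Hn. eapply Rle_lt_trans; [apply Dfun_ub; auto| apply HN; lia].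
Qed.

End SupDistance.

Definition no_finite_subcover {T I : Type} (U : I -> T -> Prop) (S : T -> Prop) : Prop :=
  ~ exists l : list I, forall x, S x -> exists i, In i l /\ U i x.

(* Covers by sets of small diameter rather than nets, which would need a point chosen in
   each class. *)
Definition totally_bounded_in {T : Type} (A : T -> Prop) (d : T -> T -> R) : Prop :=
  forall eps, 0 < eps -> exists l : list (T -> Prop),
    (forall x, A x -> exists W, In W l /\ W x) /\
    (forall W x y, In W l -> A x -> A y -> W x -> W y -> d x y <= eps).

Lemma no_finite_subcover_inhabited {T I : Type} (U : I -> T -> Prop) S :
  no_finite_subcover U S -> exists x, S x.
Proof.
  intros HS. apply NNPP. intros Hempty. apply HS. exists nil.
  intros x Hx. exfalso. eauto.
Qed.

Lemma no_finite_subcover_split {T I : Type} (U : I -> T -> Prop) (l : list (T -> Prop)) :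
  forall S, no_finite_subcover U S -> (forall x, S x -> exists W, In W l /\ W x) ->
  exists W, In W l /\ no_finite_subcover U (fun x => S x /\ W x).
Proof.
  induction l as [|W l IH]; intros S HS Hcov.
  - destruct (no_finite_subcover_inhabited U S HS) as [x Hx].
    destruct (Hcov x Hx) as [? [[] _]].
  - destruct (classic (no_finite_subcover U (fun x => S x /\ W x))) as [HW|HW].
    + exists W. split; [left; reflexivity| exact HW].
    + apply NNPP in HW. destruct HW as [lW HlW].
      destruct (IH (fun x => S x /\ ~ W x)) as [W' [HinW' HW']].
      * intros [l' Hl']. apply HS. exists (lW ++ l'). intros x Hx.
        destruct (classic (W x)) as [Wx|Wx];
          [destruct (HlW x (conj Hx Wx)) as [i [Hi Ui]]
          |destruct (Hl' x (conj Hx Wx)) as [i [Hi Ui]]];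
          exists i; split; auto; apply in_or_app; auto.
      * intros x [Hx Wx]. destruct (Hcov x Hx) as [W'' [[<-|Hin] HW'']]; [contradiction| eauto].
      * exists W'. split; [right; exact HinW'|].
        intros [l' Hl']. apply HW'. exists l'. intros x [[Hx _] HW'x]. auto.
Qed.

Lemma compact_in_increasing_cover {T : Type} (A : T -> Prop) d (U : nat -> T -> Prop) :
  compact_in A d -> (forall N, open_in A d (U N)) -> (forall x, A x -> exists N, U N x) ->
  (forall N M x, (N <= M)%nat -> U N x -> U M x) -> exists N, forall x, A x -> U N x.
Proof.
  intros Hc Ho Hcov Hmon. destruct (Hc nat U Ho Hcov) as [l Hl].
  exists (list_max l). intros x Hx. destruct (Hl x Hx) as [i [Hi HUi]].
  apply (Hmon i); [|exact HUi].
  exact (proj1 (Forall_forall _ l) (proj1 (list_max_le l _) (le_n _)) i Hi).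
Qed.

Section PseudometricCompactness.
Context {T : Type} (A : T -> Prop) (d : T -> T -> R).
Hypothesis d_pseudo : pseudometric_on A d.

Lemma compact_in_bounded : compact_in A d -> exists M, forall x y, A x -> A y -> d x y <= M.
Proof.
  destruct d_pseudo as [d0 [dsym dtri]]. intros Hc.
  destruct (classic (exists x0, A x0)) as [[x0 Hx0]|Hempty];
    [|exists 0; intros x y Hx; exfalso; eauto].
  destruct (compact_in_increasing_cover A d (fun N y => d x0 y < INR N) Hc) as [N HN].
  - intros N x Hx Hlt. exists (INR N - d x0 x). split; [lra|].
    intros y Hy Hxy. pose proof (dtri x0 x y Hx0 Hx Hy). lra.
  - intros x _. destruct (INR_unbounded (d x0 x)) as [n Hn]. exists n. lra.
  - intros N M x HNM Hx. pose proof (le_INR _ _ HNM). lra.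
  - exists (2 * INR N). intros x y Hx Hy.
    pose proof (dtri x x0 y Hx Hx0 Hy). rewrite (dsym x x0 Hx Hx0) in *.
    pose proof (HN x Hx). pose proof (HN y Hy). lra.
Qed.

Lemma compact_in_finite_net eps : compact_in A d -> 0 < eps ->
  exists l : list T, (forall c, In c l -> A c) /\
    forall x, A x -> exists c, In c l /\ d c x < eps.
Proof.
  destruct d_pseudo as [d0 [dsym dtri]]. intros Hc Heps.
  (* Indexing the cover by [{c | A c}] keeps the centres inside [A]. *)
  destruct (Hc {c | A c} (fun c x => d (proj1_sig c) x < eps)) as [l Hl].
  - intros [c Hc'] x Hx Hcx. exists (eps - d c x). split; [simpl in *; lra|].
    intros y Hy Hxy. simpl. pose proof (dtri c x y Hc' Hx Hy). lra.
  - intros x Hx. exists (exist _ x Hx). simpl. rewrite d0; assumption.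
  - exists (map (@proj1_sig _ _) l). split.
    + intros c Hin. apply in_map_iff in Hin. destruct Hin as [[c' Hc'] [<- _]]. exact Hc'.
    + intros x Hx. destruct (Hl x Hx) as [c [Hin Hcx]].
      exists (proj1_sig c). split; [apply in_map; exact Hin| exact Hcx].
Qed.

(* A Cauchy sequence without limit stays eventually away from every point of [A];
   these "eventually far" sets form an increasing open cover of [A]. *)
Lemma compact_in_complete : compact_in A d -> complete_in A d.
Proof.
  destruct d_pseudo as [d0 [dsym dtri]]. intros Hc u Hu Hcau.
  apply NNPP. intros Hnolim.
  assert (Hfar : forall x, A x -> exists N e, 0 < e /\ forall n, (N <= n)%nat -> e < d (u n) x).
  { intros x Hx.
    assert (Hnot : ~ seq_converges d u x) by (intros Hcv; apply Hnolim; eauto).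
    apply not_all_ex_not in Hnot. destruct Hnot as [eps Heps].
    apply imply_to_and in Heps. destruct Heps as [Heps Hnot].
    destruct (Hcau (eps / 2)) as [N HN]; [lra|].
    assert (Hm : exists m, (N <= m)%nat /\ eps <= d (u m) x).
    { apply NNPP. intros Hno. apply Hnot. exists N. intros n Hn.
      apply Rnot_le_lt. intros Hle. apply Hno. eauto. }
    destruct Hm as [m [Hm Hmx]]. exists N, (eps / 2). split; [lra|].
    intros n Hn. pose proof (dtri (u m) (u n) x (Hu m) (Hu n) Hx).
    pose proof (HN m n Hm Hn). lra. }
  destruct (compact_in_increasing_cover A d
              (fun N x => exists e, 0 < e /\ forall n, (N <= n)%nat -> e < d (u n) x) Hc)
    as [N HN].
  - intros N x Hx [e [He Hn]]. exists (e / 2). split; [lra|]. intros y Hy Hxy.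
    exists (e / 2). split; [lra|]. intros n Hn'. specialize (Hn n Hn').
    pose proof (dtri (u n) y x (Hu n) Hy Hx). rewrite (dsym y x Hy Hx) in *. lra.
  - intros x Hx. destruct (Hfar x Hx) as [N [e He]]. eauto.
  - intros N M x HNM [e [He Hn]]. exists e. split; [exact He|]. intros n Hn'. apply Hn. lia.
  - destruct (HN (u N) (Hu N)) as [e [He Hn]]. specialize (Hn N (le_n N)).
    rewrite d0 in Hn; [lra| apply Hu].
Qed.

Lemma no_finite_subcover_shrinking {I : Type} (U : I -> T -> Prop) :
  totally_bounded_in A d -> no_finite_subcover U A ->
  exists B : nat -> T -> Prop,
    (forall n x, B n x -> A x) /\ (forall n, no_finite_subcover U (B n)) /\
    (forall n m, (n <= m)%nat -> forall x, B m x -> B n x) /\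
    (forall k m x y, (S k <= m)%nat -> B m x -> B m y -> d x y <= / INR (S k)).
Proof.
  intros Htb HA.
  set (P := fun B : T -> Prop => (forall x, B x -> A x) /\ no_finite_subcover U B).
  set (shrinks := fun n (B B' : T -> Prop) => (forall x, B' x -> B x) /\
         forall x y, B' x -> B' y -> d x y <= / INR (S n)).
  destruct (sequence_choice P shrinks A) as [B [_ HB]].
  { split; [auto| exact HA]. }
  { intros n B [HBA HB]. destruct (Htb (/ INR (S n))) as [l [Hl Hdiam]].
    { apply Rinv_0_lt_compat, lt_0_INR. lia. }
    destruct (no_finite_subcover_split U l B HB) as [W [HW HBW]].
    { intros x Hx. apply Hl, HBA, Hx. }
    exists (fun x => B x /\ W x). repeat split; try tauto.
    - intros x [Hx _]. auto.
    - intros x y [Hx Wx] [Hy Wy]. apply (Hdiam W); auto. }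
  assert (Hnest : forall n m, (n <= m)%nat -> forall x, B m x -> B n x).
  { intros n m Hnm. induction Hnm as [|m Hnm IH]; auto.
    intros x Hx. apply IH, (HB m), Hx. }
  exists B. split; [intros n; apply (HB n)|]. split; [intros n; apply (HB n)|].
  split; [exact Hnest|].
  intros k m x y Hm Hx Hy. apply (HB k); apply (Hnest (S k) m); assumption.
Qed.

(* Pick a point in each shrunken set: they form a Cauchy sequence whose limit lies in some
   open [U i], which then swallows one of the shrunken sets. *)
Lemma totally_bounded_complete_compact :
  totally_bounded_in A d -> complete_in A d -> compact_in A d.
Proof.
  destruct d_pseudo as [d0 [dsym dtri]]. intros Htb Hcomp I U Ho Hcov.
  apply NNPP. intros HA.
  destruct (no_finite_subcover_shrinking U Htb HA) as (B & HBA & HBnofin & Hnest & Hsmall).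
  destruct (choice (fun n x => B n x)) as [xs Hxs].
  { intros n. apply (no_finite_subcover_inhabited U), HBnofin. }
  destruct (Hcomp xs) as [lim [Hlim Hconv]].
  - intros n. apply (HBA n), Hxs.
  - intros eps Heps. destruct (inv_succ_lt eps Heps) as [k Hk].
    exists (S k). intros m n Hm Hn.
    pose proof (Hsmall k (S k) (xs m) (xs n) (le_n _)
                  (Hnest _ _ Hm _ (Hxs m)) (Hnest _ _ Hn _ (Hxs n))). lra.
  - destruct (Hcov lim Hlim) as [i Hi]. destruct (Ho i lim Hlim Hi) as [r [Hr Hball]].
    destruct (inv_succ_lt (r / 2)) as [k Hk]; [lra|].
    destruct (Hconv (r / 2)) as [N HN]; [lra|].
    set (n := max (S k) N).
    apply (HBnofin n). exists (i :: nil). intros y Hy.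
    exists i. split; [left; reflexivity|].
    apply Hball; [eapply HBA; eauto|].
    pose proof (HN n ltac:(unfold n; lia)).
    pose proof (Hsmall k n (xs n) y ltac:(unfold n; lia) (Hxs n) Hy).
    pose proof (dtri lim (xs n) y Hlim (HBA _ _ (Hxs n)) (HBA _ _ Hy)).
    rewrite (dsym lim (xs n) Hlim (HBA _ _ (Hxs n))) in *. lra.
Qed.

End PseudometricCompactness.

Definition maps_into {X Y : Type} (Phi : (X -> R) -> Prop) (Psi : (Y -> R) -> Prop)
  (F : (X -> R) -> (Y -> R)) : Prop :=
  forall phi, Phi phi -> Psi (F phi).

Definition nonexpansive {X Y : Type} (Phi : (X -> R) -> Prop)
  (F : (X -> R) -> (Y -> R)) : Prop :=
  forall phi1 phi2, Phi phi1 -> Phi phi2 -> Dfun (F phi1) (F phi2) <= Dfun phi1 phi2.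

Section GeneoDistance.
Context {X Y : Type} (Phi : (X -> R) -> Prop) (Psi : (Y -> R) -> Prop).
Hypothesis Phi_inhabited : exists phi, Phi phi.
Variable M : R.
Hypothesis Psi_diameter : forall p q, Psi p -> Psi q -> Dfun p q <= M.

Lemma DGENEO_le (F1 F2 : (X -> R) -> (Y -> R)) c :
  (forall phi, Phi phi -> Dfun (F1 phi) (F2 phi) <= c) -> DGENEO Phi F1 F2 <= c.
Proof.
  intros Hc. destruct Phi_inhabited as [phi0 Hphi0]. apply supR_le.
  - exists (Dfun (F1 phi0) (F2 phi0)), phi0. auto.
  - intros r [phi [Hphi ->]]. auto.
Qed.

Lemma DGENEO_ub (F1 F2 : (X -> R) -> (Y -> R)) phi :
  maps_into Phi Psi F1 -> maps_into Phi Psi F2 -> Phi phi ->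
  Dfun (F1 phi) (F2 phi) <= DGENEO Phi F1 F2.
Proof.
  intros H1 H2 Hphi. apply (supR_ub _ M); [|eauto].
  intros r [phi' [Hphi' ->]]. auto.
Qed.

Lemma DGENEO_pseudometric : pseudometric_on Psi Dfun ->
  pseudometric_on (maps_into Phi Psi) (@DGENEO X Y Phi).
Proof.
  intros [d0 [dsym dtri]]. split; [|split].
  - intros F HF. apply Rle_antisym.
    + apply DGENEO_le. intros phi Hphi. rewrite d0; auto. lra.
    + destruct Phi_inhabited as [phi0 Hphi0].
      rewrite <- (d0 (F phi0)); auto. apply DGENEO_ub; auto.
  - intros F1 F2 H1 H2.
    apply Rle_antisym; apply DGENEO_le; intros phi Hphi;
      rewrite dsym; auto; apply DGENEO_ub; auto.
  - intros F1 F2 F3 H1 H2 H3. apply DGENEO_le. intros phi Hphi.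
    eapply Rle_trans; [apply (dtri _ (F2 phi)); auto|].
    apply Rplus_le_compat; apply DGENEO_ub; auto.
Qed.

End GeneoDistance.

(* [net_classes e Lpsi L] sorts maps [F] according to which centre of [Lpsi] lies within
   [e] of [F c], for each [c] in [L]. *)
Fixpoint net_classes {X Y : Type} (e : R) (Lpsi : list (Y -> R)) (L : list (X -> R))
  : list (((X -> R) -> (Y -> R)) -> Prop) :=
  match L with
  | nil => (fun _ => True) :: nil
  | c :: L' =>
      flat_map (fun W => map (fun p F => W F /\ Dfun (F c) p < e) Lpsi)
               (net_classes e Lpsi L')
  end.

Lemma net_classes_cover {X Y : Type} e (Lpsi : list (Y -> R)) (L : list (X -> R)) F :
  (forall c, In c L -> exists p, In p Lpsi /\ Dfun (F c) p < e) ->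
  exists W, In W (net_classes e Lpsi L) /\ W F.
Proof.
  induction L as [|c L IH]; intros Hnear.
  - exists (fun _ => True). split; [left; reflexivity| exact I].
  - destruct IH as [W [HW WF]]; [intros c' Hc'; apply Hnear; right; exact Hc'|].
    destruct (Hnear c (or_introl eq_refl)) as [p [Hp Hcp]].
    exists (fun F' => W F' /\ Dfun (F' c) p < e). split; [|split; assumption].
    apply in_flat_map. exists W. split; [exact HW|].
    apply (in_map (fun p F' => W F' /\ Dfun (F' c) p < e)), Hp.
Qed.

Lemma In_net_classes {X Y : Type} e (Lpsi : list (Y -> R)) (L : list (X -> R)) W c :
  In W (net_classes e Lpsi L) -> In c L ->
  exists p, In p Lpsi /\ forall F, W F -> Dfun (F c) p < e.
Proof.
  revert W. induction L as [|c' L IH]; intros W HW Hc; [destruct Hc|].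
  apply in_flat_map in HW. destruct HW as [W' [HW' HW]].
  apply in_map_iff in HW. destruct HW as [p [<- Hp]].
  destruct Hc as [<-|Hc].
  - exists p. split; [exact Hp|]. intros F [_ HF]. exact HF.
  - destruct (IH W' HW' Hc) as [q [Hq Hclose]].
    exists q. split; [exact Hq|]. intros F [HF _]. auto.
Qed.

Section GeneoSpace.
Context {X Y : Type} (Phi : (X -> R) -> Prop) (G : (X -> X) -> Prop)
  (Psi : (Y -> R) -> Prop) (T : (X -> X) -> (Y -> Y)).
Hypotheses (X_inhabited : inhabited X) (Y_inhabited : inhabited Y)
  (Phi_inhabited : exists phi, Phi phi)
  (Phi_bounded : forall phi, Phi phi -> bounded_fun phi)
  (Psi_bounded : forall psi, Psi psi -> bounded_fun psi)
  (Phi_compact : compact_in Phi Dfun) (Psi_compact : compact_in Psi Dfun)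
  (Phi_comp : forall phi g, Phi phi -> G g -> Phi (fun x => phi (g x))).

Lemma Phi_pseudometric : pseudometric_on Phi Dfun.
Proof. exact (pseudometric_on_sub _ _ _ Phi_bounded (Dfun_pseudometric X_inhabited)). Qed.

Lemma Psi_pseudometric : pseudometric_on Psi Dfun.
Proof. exact (pseudometric_on_sub _ _ _ Psi_bounded (Dfun_pseudometric Y_inhabited)). Qed.

Lemma is_GENEO_pointwise_limit (u : nat -> (X -> R) -> (Y -> R)) lim :
  (forall n, is_GENEO Phi G Psi T (u n)) -> maps_into Phi Psi lim ->
  (forall phi y, Phi phi -> Un_cv (fun n => u n phi y) (lim phi y)) ->
  is_GENEO Phi G Psi T lim.
Proof.
  intros Hu Hlim Hcv. split; [exact Hlim| split].
  - intros phi g Hphi Hg. apply functional_extensionality. intros y.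
    apply Rdist_refl, Rle_antisym; [|apply Rabs_pos].
    apply (Un_cv_dist_le _ _ _ _ 0 0 (Hcv _ y (Phi_comp phi g Hphi Hg)) (Hcv phi (T g y) Hphi)).
    intros n _. destruct (Hu n) as [_ [Hequiv _]]. rewrite (Hequiv phi g Hphi Hg).
    rewrite Rminus_diag, Rabs_R0. apply Rle_refl.
  - intros phi1 phi2 H1 H2. apply Dfun_le; [exact Y_inhabited|]. intros y.
    apply (Un_cv_dist_le _ _ _ _ _ 0 (Hcv phi1 y H1) (Hcv phi2 y H2)).
    intros n _. destruct (Hu n) as [Hmaps [_ Hne]].
    eapply Rle_trans; [apply Dfun_ub; apply Psi_bounded, Hmaps; assumption|].
    apply Hne; assumption.
Qed.

Lemma geneos_complete : complete_in (is_GENEO Phi G Psi T) (DGENEO Phi).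
Proof.
  destruct (compact_in_bounded Psi Dfun Psi_pseudometric Psi_compact) as [M HM].
  intros u Hu Hcau.
  assert (Hmaps : forall n, maps_into Phi Psi (u n)) by (intros n; exact (proj1 (Hu n))).
  assert (Hcau_at : forall phi, Phi phi -> cauchy_seq Dfun (fun n => u n phi)).
  { intros phi Hphi eps Heps. destruct (Hcau eps Heps) as [N HN]. exists N.
    intros m n Hm Hn. eapply Rle_lt_trans; [apply (DGENEO_ub Phi Psi M HM)|]; auto. }
  assert (Hlim : forall phi, exists l,
             Phi phi -> Psi l /\ seq_converges Dfun (fun n => u n phi) l).
  { intros phi. destruct (classic (Phi phi)) as [Hphi|Hphi]; [|exists (fun _ => 0); tauto].
    destruct (compact_in_complete Psi Dfun Psi_pseudometric Psi_compact (fun n => u n phi))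
      as [l Hl]; [intros n; apply Hmaps, Hphi| apply Hcau_at, Hphi|].
    exists l. intros _. exact Hl. }
  destruct (choice _ Hlim) as [lim Hlim_spec].
  assert (lim_maps : maps_into Phi Psi lim) by (intros phi Hphi; apply Hlim_spec, Hphi).
  assert (Hpt : forall phi y, Phi phi -> Un_cv (fun n => u n phi y) (lim phi y)).
  { intros phi y Hphi. apply (Dfun_converges_pointwise (fun n => u n phi)).
    - intros n. apply Psi_bounded, Hmaps, Hphi.
    - apply Psi_bounded, lim_maps, Hphi.
    - apply Hlim_spec, Hphi. }
  exists lim. split; [exact (is_GENEO_pointwise_limit u lim Hu lim_maps Hpt)|].
  intros eps Heps. destruct (Hcau (eps / 2)) as [N HN]; [lra|]. exists N. intros n Hn.
  apply Rle_lt_trans with (eps / 2); [|lra].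
  apply DGENEO_le; [exact Phi_inhabited|]. intros phi Hphi.
  apply Dfun_le; [exact Y_inhabited|]. intros y.
  apply (Un_cv_dist_le _ _ _ _ _ N (Un_cv_const (u n phi y)) (Hpt phi y Hphi)).
  intros m Hm. apply Rlt_le.
  eapply Rle_lt_trans; [apply Dfun_ub; apply Psi_bounded, Hmaps, Hphi|].
  eapply Rle_lt_trans; [apply (DGENEO_ub Phi Psi M HM); auto| apply HN; auto].
Qed.

(* Arzela-Ascoli: nonexpansiveness lets finite nets of [Phi] and [Psi] pin down a map
   up to [4 e] on all of [Phi]. *)
Lemma nonexpansive_maps_totally_bounded (S : ((X -> R) -> (Y -> R)) -> Prop) :
  (forall F, S F -> maps_into Phi Psi F /\ nonexpansive Phi F) ->
  totally_bounded_in S (DGENEO Phi).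
Proof.
  intros HS eps Heps. set (e := eps / 4).
  destruct (compact_in_finite_net Phi Dfun Phi_pseudometric e Phi_compact)
    as [Lphi [Lphi_Phi Phi_net]]; [unfold e; lra|].
  destruct (compact_in_finite_net Psi Dfun Psi_pseudometric e Psi_compact)
    as [Lpsi [Lpsi_Psi Psi_net]]; [unfold e; lra|].
  destruct Psi_pseudometric as [_ [dsym dtri]].
  exists (net_classes e Lpsi Lphi). split.
  - intros F HF. apply net_classes_cover. intros c Hc.
    assert (HFc : Psi (F c)) by (apply (HS F HF), Lphi_Phi, Hc).
    destruct (Psi_net (F c) HFc) as [p [Hp Hpc]].
    exists p. split; [exact Hp|]. rewrite dsym; auto.
  - intros W F F' HW HF HF' WF WF'. apply DGENEO_le; [exact Phi_inhabited|].
    intros phi Hphi. destruct (Phi_net phi Hphi) as [c [Hc Hcphi]].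
    destruct (In_net_classes e Lpsi Lphi W c HW Hc) as [p [Hp Hclose]].
    destruct (HS F HF) as [FPsi Fne]. destruct (HS F' HF') as [F'Psi F'ne].
    assert (Phi_c : Phi c) by (apply Lphi_Phi, Hc).
    assert (Psi_p : Psi p) by (apply Lpsi_Psi, Hp).
    pose proof (Hclose F WF). pose proof (Hclose F' WF').
    pose proof (Fne c phi Phi_c Hphi). pose proof (F'ne c phi Phi_c Hphi).
    pose proof (dtri (F phi) (F c) (F' phi) (FPsi _ Hphi) (FPsi c Phi_c) (F'Psi _ Hphi)).
    pose proof (dtri (F c) p (F' phi) (FPsi c Phi_c) Psi_p (F'Psi _ Hphi)).
    pose proof (dtri p (F' c) (F' phi) Psi_p (F'Psi c Phi_c) (F'Psi _ Hphi)).
    rewrite (dsym (F phi) (F c)) in *; auto. rewrite (dsym p (F' c)) in *; auto.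
    unfold e in *. lra.
Qed.

End GeneoSpace.

Theorem mainTheorem10 (X Y : Type) (Phi : (X -> R) -> Prop) (G : (X -> X) -> Prop)
  (Psi : (Y -> R) -> Prop) (H : (Y -> Y) -> Prop) (T : (X -> X) -> (Y -> Y)) :
  perception_pair Phi G -> perception_pair Psi H -> is_hom G H T ->
  compact_in (is_GENEO Phi G Psi T) (DGENEO Phi).
Proof.
  intros [HX [HPhi [Phi_bdd [Phi_cpt [_ [[G_homeo _] _]]]]]]
         [HY [_ [Psi_bdd [Psi_cpt _]]]] _.
  assert (Phi_comp : forall phi g, Phi phi -> G g -> Phi (fun x => phi (g x))).
  { intros phi g Hphi Hg. destruct (G_homeo g Hg) as [ginv [_ [_ [_ [_ Hstable]]]]].
    apply (Hstable phi Hphi). }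
  pose proof (Psi_pseudometric Psi HY Psi_bdd) as Psi_pseudo.
  destruct (compact_in_bounded Psi Dfun Psi_pseudo Psi_cpt) as [M HM].
  apply totally_bounded_complete_compact.
  - apply (pseudometric_on_sub _ (maps_into Phi Psi)); [intros F HF; exact (proj1 HF)|].
    exact (DGENEO_pseudometric Phi Psi HPhi M HM Psi_pseudo).
  - apply (nonexpansive_maps_totally_bounded Phi Psi); auto.
    intros F [Hmaps [_ Hne]]. split; assumption.
  - apply (geneos_complete Phi G Psi T); assumption.
Qed.
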